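(* Let $n\ge 5$ be an integer and let $\mathcal{H}$ be a Berge-$K_4$-saturated $3$-graph on $n$ vertices with the minimum number of hyperedges (among all such $3$-graphs on $n$ vertices). Suppose there is a vertex $v_1\in V(\mathcal{H})$ with $d_{\mathcal{H}}(v_1)=3$ such that every pair $(v_i,v_j)\in N^d_{\mathcal{H}}(v_1)$ is good and the pair $(v_1,v_k)$ is good for every $v_k\in N_{\mathcal{H}}(v_1)$. Then there exist four vertices $v_2,v_3,v_4,v_5$ such that $\mathcal{H}[\{v_1,v_2,v_3,v_4,v_5\}]$ contains a copy of $\mathcal{C}^3_5$.
   Context: A $3$-graph has all hyperedges of size $3$. A $3$-graph contains a Berge-$K_4$ if there are $4$ distinct vertices and $6$ distinct hyperedges, one containing each of the $6$ pairs of these vertices. $\mathcal{H}$ is Berge-$K_4$-saturated if it contains no Berge-$K_4$ but adding any $3$-set not already a hyperedge creates a Berge-$K_4$. For distinct vertices $u,v$, the pair $(u,v)$ is good if there exist distinct vertices $x,y\notin\{u,v\}$ and five distinct hyperedges of $\mathcal{H}$ containing respectively $\{u,x\},\{u,y\},\{v,x\},\{v,y\},\{x,y\}$; otherwise it is bad. $d_{\mathcal{H}}(v)$ is the number of hyperedges containing $v$; $N^d_{\mathcal{H}}(v)=\{(v_i,v_j): vv_iv_j\in E(\mathcal{H})\}$; $N_{\mathcal{H}}(v)$ is the set of vertices $w\neq v$ lying in a common hyperedge with $v$. $\mathcal{C}^3_5$ is the tight $3$-uniform $5$-cycle with vertices $w_1,\dots,w_5$ and hyperedges $w_iw_{i+1}w_{i+2}$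 ($i\in\{1,\dots,5\}$, indices mod $5$). *)

From mathcomp Require Import all_boot.
Set Implicit Arguments. Unset Strict Implicit. Unset Printing Implicit Defensive.

Section Hyper.
Variable T : finType.
Implicit Types (H : {set {set T}}) (u v x y : T).

Definition is_3graph H : Prop := forall e, e \in H -> #|e| = 3.

Definition pairs_of (S : {set T}) : {set {set T}} :=
  [set p : {set T} | (p \subset S) && (#|p| == 2)].

(* Berge-K4: 4 distinct vertices and 6 distinct hyperedges, one containing
   each of the 6 pairs of these vertices (an injective assignment). *)
Definition has_berge_K4 H : Prop :=
  exists S : {set T}, #|S| = 4 /\
    exists f : {set T} -> {set T},
      {in pairs_of S &, injective f} /\
      (forall p, p \in pairs_of S -> f p \in H /\ p \subset f p).

Definition berge_K4_saturated H : Prop :=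
  is_3graph H /\ ~ has_berge_K4 H /\
  (forall e : {set T}, #|e| = 3 -> e \notin H -> has_berge_K4 (e |: H)).

Definition good_pair H u v : Prop :=
  u != v /\
  exists x y, [/\ x != y, x \notin [set u; v], y \notin [set u; v] &
   exists e1 e2 e3 e4 e5 : {set T},
     [/\ uniq [:: e1; e2; e3; e4; e5],
         [&& e1 \in H, e2 \in H, e3 \in H, e4 \in H & e5 \in H] &
         [&& [set u; x] \subset e1, [set u; y] \subset e2,
             [set v; x] \subset e3, [set v; y] \subset e4 &
             [set x; y] \subset e5]]].

Definition hdeg H v : nat := #|[set e in H | v \in e]|.

Definition in_Nd H v vi vj : Prop :=
  [/\ vi != vj, vi != v, vj != v & [set v; vi; vj] \in H].

Definition in_N H v w : Prop :=
  w != v /\ exists2 e, e \in H & (v \in e) && (w \in e).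

Definition contains_C35_on H (S : {set T}) : Prop :=
  exists w1 w2 w3 w4 w5 : T,
    [/\ uniq [:: w1; w2; w3; w4; w5],
        [set w1; w2; w3; w4; w5] = S &
        [&& [set w1; w2; w3] \in H, [set w2; w3; w4] \in H,
            [set w3; w4; w5] \in H, [set w4; w5; w1] \in H &
            [set w5; w1; w2] \in H]].
End Hyper.

From mathcomp Require Import all_boot.
Set Implicit Arguments. Unset Strict Implicit. Unset Printing Implicit Defensive.

(* Let (u, w) be a good pair with witnesses x, y in a Berge-K4-free 3-graph.  Every
   hyperedge through u and w is one of the five witnessing hyperedges (else they form a
   Berge-K4 on {u, w, x, y}), hence is u w x or u w y.  Applied to a spoke (v1, b), this
   puts b on at most two of the three hyperedges through v1.  Applied to a link edge
   (u, w), i.e. v1 u w in H, it makes v1 a witness; the other witness y lies on a third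
   hyperedge through v1, and since d(v1) = 3 the witnessing hyperedges through u y and
   w y avoid v1.  Consequently the link graph of v1 is a triangle a b c or a path
   p q r s.  Avoiding a Berge-K4 on v1 and three link vertices, a hyperedge avoiding v1
   that contains two of them must contain the third as soon as the two other pairs are
   covered by distinct hyperedges avoiding v1.  For a triangle this forces two distinct
   hyperedges to equal {a, b, c}.  For a path it forces p q s and s r p to be
   hyperedges, so that v1 r s p q is a tight 5-cycle. *)

(* Proves a conjunction of disequalities (stated with [!=], [\notin] or [uniq]) between
   terms that are pairwise distinct entries of the list in [hu : uniq _]: each equation
   between two of them, rewritten into [hu], makes [hu] false. *)
Ltac distinct hu :=
  rewrite /= ?inE ?negb_or ?andbT; repeat (apply/andP; split);
  apply/eqP; let E := fresh in intro E;
  move: (hu); rewrite E /= !inE ?eqxx ?orbT /= ?andbF; done.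

Section SmallSets.
Variable T : finType.
Implicit Types (a b c d : T) (e : {set T}).

Lemma subset2 a b e : ([set a; b] \subset e) = (a \in e) && (b \in e).
Proof. by rewrite subUset !sub1set. Qed.

Lemma cards_seq (s : seq T) : uniq s -> #|[set:: s]| = size s.
Proof. by rewrite cardsE => /card_uniqP. Qed.

Lemma cards3 a b c : uniq [:: a; b; c] -> #|[set a; b; c]| = 3.
Proof.
have -> : [set a; b; c] = [set:: [:: a; b; c]] by apply/setP=> z; rewrite !inE orbA.
exact: cards_seq.
Qed.

Lemma cards4 a b c d : uniq [:: a; b; c; d] -> #|[set a; b; c; d]| = 4.
Proof.
have -> : [set a; b; c; d] = [set:: [:: a; b; c; d]].
  by apply/setP=> z; rewrite !inE !orbA.
exact: cards_seq.
Qed.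

Lemma set3_rot a b c : [set a; b; c] = [set b; c; a].
Proof. by rewrite (setUC [set a]) setUAC. Qed.

Lemma card3_set3 e a b c : #|e| = 3 -> uniq [:: a; b; c] ->
  a \in e -> b \in e -> c \in e -> e = [set a; b; c].
Proof.
move=> e3 abc ae be ce; apply/esym/eqP; rewrite eqEcard e3 cards3 // andbT.
by apply/subsetP=> z; rewrite !inE -orbA => /or3P[] /eqP->.
Qed.

Lemma card3_extend e a b : #|e| = 3 -> a \in e -> b \in e -> a != b ->
  exists2 c, uniq [:: a; b; c] & e = [set a; b; c].
Proof.
move=> e3 ae be ab.
have [c ce] : exists c, c \in e :\: [set a; b].
  by apply/card_gt0P; rewrite cardsD e3 (setIidPr _) ?cards2 ?ab // subset2 ae.
move: ce; rewrite !inE negb_or => /andP[/andP[ca cb] ce].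
have abc : uniq [:: a; b; c] by rewrite /= !inE negb_or ab !(eq_sym _ c) ca cb.
by exists c; last exact: card3_set3.
Qed.

Lemma card3_split e a : #|e| = 3 -> a \in e ->
  exists b c, uniq [:: a; b; c] /\ e = [set a; b; c].
Proof.
move=> e3 ae.
have [b] : exists b, b \in e :\ a.
  by apply/card_gt0P; move: e3; rewrite (cardsD1 a) ae add1n => -[->].
rewrite !inE eq_sym => /andP[ab be].
by have [c] := card3_extend e3 ae be ab; exists b, c.
Qed.
End SmallSets.

Section BergeK4.
Variables (T : finType) (H : {set {set T}}).
Implicit Types (a b c d : T).

Lemma pairs_of_set4 a b c d p : p \in pairs_of [set a; b; c; d] ->
  p \in [:: [set a; b]; [set a; c]; [set a; d]; [set b; c]; [set b; d]; [set c; d]].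
Proof.
rewrite inE => /andP[/subsetP sp /cards2P[x [y [xy pxy]]]].
have := sp x; have := sp y; rewrite pxy !inE !eqxx orbT /= -!orbA => /(_ isT) yS /(_ isT) xS.
by move: xy; case/or4P: xS => /eqP-> /=; case/or4P: yS => /eqP-> //=;
  rewrite ?eqxx ?orbT // => _; rewrite setUC eqxx /= ?orbT.
Qed.

Lemma berge_K4_of_edges a b c d (Eab Eac Ead Ebc Ebd Ecd : {set T}) :
  uniq [:: a; b; c; d] -> uniq [:: Eab; Eac; Ead; Ebc; Ebd; Ecd] ->
  all (mem H) [:: Eab; Eac; Ead; Ebc; Ebd; Ecd] ->
  [&& [set a; b] \subset Eab, [set a; c] \subset Eac, [set a; d] \subset Ead,
      [set b; c] \subset Ebc, [set b; d] \subset Ebd & [set c; d] \subset Ecd] ->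
  has_berge_K4 H.
Proof.
move=> abcd uE /allP EH sE.
pose P := [:: [set a; b]; [set a; c]; [set a; d]; [set b; c]; [set b; d]; [set c; d]].
pose E := [:: Eab; Eac; Ead; Ebc; Ebd; Ecd].
exists [set a; b; c; d]; split; first exact: cards4.
exists (fun p => nth set0 E (index p P)); split.
  move=> p1 p2 /pairs_of_set4 p1P /pairs_of_set4 p2P /eqP.
  rewrite nth_uniq ?index_mem // => /eqP e12.
  by rewrite -(nth_index set0 p1P) -(nth_index set0 p2P) e12.
move=> p /pairs_of_set4 pP; split; first by apply/EH/mem_nth; rewrite index_mem.
rewrite -{1}(nth_index set0 pP).
have : index p P < 6 by rewrite index_mem.
by case: (index p P) sE => [|[|[|[|[|[|]]]]]] //= /and5P[? ? ? ? /andP[]].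
Qed.
End BergeK4.

Section GoodPairs.
Variables (T : finType) (H : {set {set T}}).
Implicit Types (u v x y z : T) (e : {set T}).

Definition good_witness u v x y (e1 e2 e3 e4 e5 : {set T}) : Prop :=
  [/\ [&& u != v, x != y, x \notin [set u; v] & y \notin [set u; v]],
      uniq [:: e1; e2; e3; e4; e5],
      [&& e1 \in H, e2 \in H, e3 \in H, e4 \in H & e5 \in H] &
      [&& [set u; x] \subset e1, [set u; y] \subset e2, [set v; x] \subset e3,
          [set v; y] \subset e4 & [set x; y] \subset e5]].

Lemma good_pairP u v : good_pair H u v ->
  exists x y e1 e2 e3 e4 e5, good_witness u v x y e1 e2 e3 e4 e5.
Proof.
case=> uv [x [y [xy xuv yuv [e1 [e2 [e3 [e4 [e5 [? ? ?]]]]]]]]].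
by exists x, y, e1, e2, e3, e4, e5; split; rewrite ?uv ?xy ?xuv ?yuv.
Qed.

Lemma good_witness_sym u v x y e1 e2 e3 e4 e5 :
  good_witness u v x y e1 e2 e3 e4 e5 -> good_witness u v y x e2 e1 e4 e3 e5.
Proof.
case=> /and4P[uv xy xuv yuv] ue /and5P[h1 h2 h3 h4 h5] /and5P[s1 s2 s3 s4 s5].
split; first by rewrite uv eq_sym xy xuv yuv.
- by distinct ue.
- by rewrite h1 h2 h3 h4 h5.
- by rewrite s1 s2 s3 s4 setUC s5.
Qed.

Hypothesis K4free : ~ has_berge_K4 H.

Lemma good_witness_cover u v x y e1 e2 e3 e4 e5 e :
  good_witness u v x y e1 e2 e3 e4 e5 -> e \in H -> [set u; v] \subset e ->
  e \in [:: e1; e2; e3; e4; e5].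
Proof.
case=> /and4P[uv xy xuv yuv] ue eH sE he se; apply/negPn/negP => ne; apply: K4free.
apply: (@berge_K4_of_edges _ _ u v x y e e1 e2 e3 e4 e5); rewrite ?se //=.
- move: xuv yuv; rewrite /= !inE !negb_or uv xy => /andP[xu xv] /andP[yu yv].
  by rewrite !(eq_sym u) !(eq_sym v) xu xv yu yv.
- by rewrite ne.
- by rewrite he andbT.
Qed.

Lemma good_witness_third u v x y e1 e2 e3 e4 e5 z :
  good_witness u v x y e1 e2 e3 e4 e5 -> [set u; v; z] \in H -> z = x \/ z = y.
Proof.
move=> w hz; have := good_witness_cover w hz.
case: w => /and4P[_ _ xuv yuv] _ _; rewrite !subset2.
case/and5P=> /andP[_ xe1] /andP[_ ye2] /andP[_ xe3] /andP[_ ye4] /andP[xe5 _].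
have third t : t \in [set u; v; z] -> t \notin [set u; v] -> z = t.
  by rewrite !inE -orbA => /or3P[] /eqP-> //; rewrite !eqxx ?orbT.
rewrite !inE !eqxx !orbT /= => /(_ isT) /or4P[| | |/orP[]] /eqP zE;
  rewrite -zE in xe1 ye2 xe3 ye4 xe5; by [left; exact: third | right; exact: third].
Qed.

Lemma good_pair_at u v z : good_pair H u v -> [set u; v; z] \in H ->
  exists y e1 e2 e3 e4 e5, good_witness u v z y e1 e2 e3 e4 e5.
Proof.
case/good_pairP=> x [y [e1 [e2 [e3 [e4 [e5 w]]]]]] hz.
case: (good_witness_third w hz) => ->; first by exists y, e1, e2, e3, e4, e5.
by exists x, e2, e1, e4, e3, e5; apply: good_witness_sym.
Qed.

Lemma good_pair_codegree u v a b c : good_pair H u v ->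
  [set u; v; a] \in H -> [set u; v; b] \in H -> [set u; v; c] \in H ->
  ~~ uniq [:: a; b; c].
Proof.
case/good_pairP=> x [y [e1 [e2 [e3 [e4 [e5 w]]]]]].
move=> /(good_witness_third w) [] -> /(good_witness_third w) [] ->
       /(good_witness_third w) [] ->; by rewrite /= !inE !eqxx ?orbT ?andbF.
Qed.

Lemma K4free_third_vertex v a b c (Ea Eb Ec G1 G2 F : {set T}) :
  uniq [:: v; a; b; c] -> uniq [:: Ea; Eb; Ec] ->
  [&& Ea \in H, Eb \in H & Ec \in H] ->
  [&& [set v; a] \subset Ea, [set v; b] \subset Eb & [set v; c] \subset Ec] ->
  G1 \in H -> G2 \in H -> G1 != G2 -> v \notin G1 -> v \notin G2 ->
  a \in G1 -> c \in G1 -> b \in G2 -> c \in G2 ->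
  F \in H -> v \notin F -> a \in F -> b \in F -> c \in F.
Proof.
move=> vabc uE /and3P[hA hB hC] sE hG1 hG2 G12 vG1 vG2 aG1 cG1 bG2 cG2 hF vF aF bF.
have [->|FG1] := eqVneq F G1; first by [].
have [->|FG2] := eqVneq F G2; first by [].
(* otherwise Ea, Eb, Ec, F, G1, G2 form a Berge-K4 on {v, a, b, c} *)
case: K4free; apply: (@berge_K4_of_edges _ _ v a b c Ea Eb Ec F G1 G2) => //.
- have vE : {in [:: Ea; Eb; Ec], forall E : {set T}, v \in E}.
    move: sE; rewrite !subset2 => /and3P[/andP[? _] /andP[? _] /andP[? _]] E.
    by rewrite !inE => /or3P[] /eqP->.
  have vG : {in [:: F; G1; G2], forall G : {set T}, v \notin G}.
    by move=> G; rewrite !inE => /or3P[] /eqP->.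
  rewrite -[[:: Ea, Eb, Ec & _]]/([:: Ea; Eb; Ec] ++ [:: F; G1; G2]) cat_uniq uE.
  rewrite andTb; apply/andP; split; last by rewrite /= !inE !negb_or FG1 FG2 G12.
  by apply/hasPn=> G /vG; apply: contra => /vE.
- by rewrite /= hA hB hC hF hG1 hG2.
- by move: sE; rewrite !subset2 aF bF aG1 cG1 bG2 cG2 => /and3P[-> -> ->].
Qed.
End GoodPairs.

Section Star.
Variables (T : finType) (H : {set {set T}}) (v : T).
Implicit Types (u w x y : T) (A B C e : {set T}).

Lemma size_le_hdeg (s : seq {set T}) :
  uniq s -> {subset s <= [set e in H | v \in e]} -> size s <= hdeg H v.
Proof. by move=> us sS; rewrite /hdeg cardE uniq_leq_size // => e /sS; rewrite mem_enum. Qed.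

Lemma hdeg_gt2_other A B : 2 < hdeg H v ->
  exists C, [/\ C \in H, v \in C, C != A & C != B].
Proof.
move=> deg_gt2; have /subsetPn[C] : ~~ ([set e in H | v \in e] \subset [set A; B]).
  apply: contraTN deg_gt2 => /subset_leq_card le2; rewrite -leqNgt (leq_trans le2) //.
  by rewrite cards2 ltnS leq_b1.
by rewrite !inE negb_or => /andP[hC vC] /andP[CA CB]; exists C.
Qed.

Hypothesis K4free : ~ has_berge_K4 H.

Lemma link_edge_not_isolated u w : good_pair H u w -> [set v; u; w] \in H ->
  exists2 B, B \in H & [&& v \in B, B != [set v; u; w] & (u \in B) || (w \in B)].
Proof.
move=> g hA; have hA' : [set u; w; v] \in H by rewrite setUAC (setUC [set u]).
have [y [e1 [e2 [e3 [e4 [e5 [_ ue /and5P[h1 _ h3 _ _] /and5P[s1 _ s3 _ _]]]]]]]] :=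
  good_pair_at K4free g hA'.
move: s1 s3; rewrite !subset2 => /andP[ue1 ve1] /andP[we3 ve3].
have e13 : e1 != e3 by distinct ue.
have [e1A|e1A] := eqVneq e1 [set v; u; w].
  by exists e3; rewrite // ve3 we3 orbT -e1A eq_sym e13.
by exists e1; rewrite // ve1 ue1 e1A.
Qed.

Lemma good_spoke_fan p q r : good_pair H v q -> p != r ->
  [set v; q; p] \in H -> [set v; q; r] \in H ->
  (forall e, e \in H -> v \in e -> p \in e -> e = [set v; q; p]) ->
  exists X Y, [&& X \in H, Y \in H & X != Y] /\
              [&& v \notin X, v \notin Y, p \in X, q \in X, p \in Y & r \in Y].
Proof.
move=> g pr hA hB onlyA.
have [y [e1 [e2 [e3 [e4 [e5 w]]]]]] := good_pair_at K4free g hA.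
have ry : r = y by case: (good_witness_third K4free w hB) => // rp; rewrite rp eqxx in pr.
case: w => _ ue /and5P[h1 _ h3 _ h5]; rewrite !subset2 -ry.
case/and5P=> /andP[ve1 pe1] _ /andP[qe3 pe3] _ /andP[pe5 re5].
have avoid e : e \in H -> p \in e -> e != e1 -> v \notin e.
  by move=> he pe; apply: contraNN => ve; rewrite (onlyA _ he ve pe) (onlyA _ h1 ve1 pe1).
exists e3, e5; split; first by rewrite h3 h5; distinct ue.
by rewrite !avoid ?pe3 ?qe3 ?pe5 ?re5 //; distinct ue.
Qed.

Hypothesis deg3 : hdeg H v = 3.

Lemma star_edges A B C e : uniq [:: A; B; C] ->
  [&& A \in H, B \in H & C \in H] -> [&& v \in A, v \in B & v \in C] ->
  e \in H -> v \in e -> e \in [:: A; B; C].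
Proof.
move=> uABC /and3P[hA hB hC] /and3P[vA vB vC] he ve; apply/negPn/negP => eABC.
have : {subset [:: e; A; B; C] <= [set e in H | v \in e]}.
  by move=> E; rewrite !inE => /or4P[] /eqP->; rewrite ?he ?hA ?hB ?hC.
by move/(size_le_hdeg _); rewrite deg3 cons_uniq eABC uABC => /(_ isT).
Qed.

Lemma good_link_apex u w : good_pair H u w -> [set v; u; w] \in H ->
  exists y P Q, [/\ in_N H v y, y \notin [set u; w],
                    [&& P \in H, Q \in H & P != Q] &
                    [&& v \notin P, v \notin Q, u \in P, y \in P, w \in Q & y \in Q]].
Proof.
move=> g hA; have hA' : [set u; w; v] \in H by rewrite setUAC (setUC [set u]).
have [y [e1 [e2 [e3 [e4 [e5 wit]]]]]] := good_pair_at K4free g hA'.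
case: wit => /and4P[_ vy _ yuw] ue /and5P[h1 h2 h3 h4 h5].
case/and5P; rewrite !subset2.
move=> /andP[ue1 ve1] /andP[ue2 ye2] /andP[we3 ve3] /andP[we4 ye4] /andP[ve5 ye5].
(* e1, e3 and e5 already are three distinct edges through v *)
have star4 (E : {set T}) : E \in [:: e2; e4] -> v \notin E.
  rewrite !inE => E24; apply/negP => vE.
  have : {subset [:: e1; E; e3; e5] <= [set e in H | v \in e]}.
    move=> e; rewrite !inE => /or4P[] /eqP->; rewrite ?h1 ?h3 ?h5 ?ve1 ?ve3 ?ve5 ?vE //.
    by case/orP: E24 => /eqP->; rewrite ?h2 ?h4.
  by move/(size_le_hdeg _); rewrite deg3; apply/implyP; case/orP: E24 => /eqP->; distinct ue.
exists y, e2, e4; split=> //.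
- by split; [rewrite eq_sym | exists e5; rewrite ?ve5].
- by rewrite h2 h4; distinct ue.
- by rewrite ue2 ye2 we4 ye4 !star4 // !inE eqxx ?orbT.
Qed.

Hypothesis is3 : is_3graph H.
Hypothesis good_link : forall u w, in_Nd H v u w -> good_pair H u w.
Hypothesis good_spoke : forall u, in_N H v u -> good_pair H v u.

Definition star_path p q r s := uniq [:: v; p; q; r; s] /\
  [&& [set v; p; q] \in H, [set v; q; r] \in H & [set v; r; s] \in H].

Lemma star_path_rev p q r s : star_path p q r s -> star_path s r q p.
Proof.
case=> vpqrs /and3P[hA hB hC]; split; first by distinct vpqrs.
by rewrite setUAC hC setUAC hB setUAC hA.
Qed.

Lemma star_path_uniq p q r s : star_path p q r s ->
  uniq [:: [set v; p; q]; [set v; q; r]; [set v; r; s]].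
Proof.
case=> vpqrs _; rewrite /= !inE !negb_or andbT -andbA.
apply/and3P; split; apply/negP => /eqP/setP XY; [move: (XY p) | move: (XY p) | move: (XY q)];
  by rewrite !inE eqxx orbT /= => /esym; apply/negP; distinct vpqrs.
Qed.

Lemma star_path_end p q r s : star_path p q r s ->
  forall e, e \in H -> v \in e -> p \in e -> e = [set v; q; p].
Proof.
move=> sp e he ve pe; rewrite setUAC; have [vpqrs /and3P[hA hB hC]] := sp.
have := star_edges (star_path_uniq sp) _ _ he ve; rewrite hA hB hC !inE eqxx => /(_ isT isT).
by case/or3P=> /eqP eE //; move: pe; rewrite eE; apply: contraTeq => _; distinct vpqrs.
Qed.

Lemma star_path_fan p q r s : star_path p q r s ->
  exists X Y, [&& X \in H, Y \in H & X != Y] /\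
              [&& v \notin X, v \notin Y, p \in X, q \in X, p \in Y & r \in Y].
Proof.
move=> sp; have [vpqrs /and3P[hA hB _]] := sp.
apply: good_spoke_fan (star_path_end sp) => //; last by rewrite setUAC.
  apply: good_spoke; split; [distinct vpqrs | exists [set v; p; q]];
  by rewrite // !inE !eqxx /= ?orbT.
by distinct vpqrs.
Qed.

Lemma star_path_no_middle p q r s W : star_path p q r s ->
  W \in H -> v \notin W -> q \in W -> r \in W -> False.
Proof.
move=> sp hW vW qW rW; have [vpqrs /and3P[hA hB hC]] := sp; have uABC := star_path_uniq sp.
have [X [Y [/and3P[hX hY XY] /and5P[vX vY pX qX /andP[pY rY]]]]] := star_path_fan sp.
have [X' [Y' [/and3P[hX' hY' XY'] /and5P[vX' vY' sX' rX' /andP[sY' qY']]]]] :=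
  star_path_fan (star_path_rev sp).
have pW : p \in W.
  apply: (K4free_third_vertex K4free (v := v) (a := q) (b := r) (Ea := [set v; q; r])
           (Eb := [set v; r; s]) (Ec := [set v; p; q]) (G1 := X) (G2 := Y)) => //.
  - by distinct vpqrs.
  - by distinct uABC.
  - by rewrite hA hB hC.
  - by rewrite !subset2 !inE !eqxx /= ?orbT.
have sW : s \in W.
  apply: (K4free_third_vertex K4free (v := v) (a := q) (b := r) (Ea := [set v; p; q])
           (Eb := [set v; q; r]) (Ec := [set v; r; s]) (G1 := Y') (G2 := X')) => //.
  - by distinct vpqrs.
  - by rewrite hA hB hC.
  - by rewrite !subset2 !inE !eqxx /= ?orbT.
  - by rewrite eq_sym.
have WE : W = [set p; q; r] by apply: card3_set3 (is3 hW) _ pW qW rW; distinct vpqrs.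
by move: sW; rewrite WE; apply/negP; distinct vpqrs.
Qed.

Lemma star_path_vertex p q r s y : star_path p q r s ->
  in_N H v y -> y \in [set p; q; r; s].
Proof.
move=> sp [yv [e he /andP[ve ye]]]; have [_ /and3P[hA hB hC]] := sp.
have := star_edges (star_path_uniq sp) _ _ he ve; rewrite hA hB hC !inE !eqxx /=.
case/(_ isT isT)/or3P=> /eqP eE; move: ye; rewrite eE !inE (negbTE yv) /=;
  by case/orP=> ->; rewrite ?orbT.
Qed.

Lemma star_path_chord p q r s : star_path p q r s -> [set p; q; s] \in H.
Proof.
move=> sp; have [vpqrs /and3P[hA hB hC]] := sp.
have gpq : good_pair H p q by apply: good_link; split=> //; distinct vpqrs.
have [y [P [Q [Ny yPQ /and3P[hP hQ PQ] /and5P[vP vQ pP yP /andP[qQ yQ]]]]]] :=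
  good_link_apex gpq hA.
have ys : y = s.
  have := star_path_vertex sp Ny; rewrite !inE -!orbA; case/or4P=> /eqP yE //.
  - by move: yPQ; rewrite yE !inE eqxx.
  - by move: yPQ; rewrite yE !inE eqxx orbT.
  - by case: (star_path_no_middle sp hQ vQ qQ); rewrite -yE.
rewrite ys in yP yQ.
have [X [Y [/and3P[hX _ _] /and5P[vX _ pX qX _]]]] := star_path_fan sp.
have sX : s \in X.
  apply: (K4free_third_vertex K4free (v := v) (a := p) (b := q) (Ea := [set v; p; q])
           (Eb := [set v; q; r]) (Ec := [set v; r; s]) (G1 := P) (G2 := Q)) => //.
  - by distinct vpqrs.
  - exact: star_path_uniq.
  - by rewrite hA hB hC.
  - by rewrite !subset2 !inE !eqxx /= ?orbT.
by rewrite -(card3_set3 (is3 hX) _ pX qX sX) //; distinct vpqrs.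
Qed.

Lemma star_path_C35 p q r s : star_path p q r s ->
  contains_C35_on H [set v; r; s; p; q].
Proof.
move=> sp; have [vpqrs /and3P[hA hB hC]] := sp.
have pqs := star_path_chord sp; have srp := star_path_chord (star_path_rev sp).
exists v, r, s, p, q; split=> //; first by distinct vpqrs.
by rewrite hC (setUC [set r]) srp set3_rot pqs -(set3_rot v) hA (set3_rot q) setUAC hB.
Qed.

Definition star_triangle a b c := uniq [:: v; a; b; c] /\
  [&& [set v; a; b] \in H, [set v; b; c] \in H & [set v; c; a] \in H].

Lemma star_triangle_rot a b c : star_triangle a b c -> star_triangle b c a.
Proof. by case=> vabc /and3P[hA hB hC]; split; [distinct vabc | rewrite hA hB hC]. Qed.

Lemma star_triangle_uniq a b c : star_triangle a b c ->
  uniq [:: [set v; a; b]; [set v; b; c]; [set v; c; a]].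
Proof.
case=> vabc _; rewrite /= !inE !negb_or andbT -andbA.
apply/and3P; split; apply/negP => /eqP/setP XY; [move: (XY a) | move: (XY b) | move: (XY b)];
  by rewrite !inE eqxx ?orbT /= => /esym; apply/negP; distinct vabc.
Qed.

Lemma star_triangle_vertex a b c y : star_triangle a b c ->
  in_N H v y -> y \in [set a; b; c].
Proof.
move=> st [yv [e he /andP[ve ye]]]; have [_ /and3P[hA hB hC]] := st.
have := star_edges (star_triangle_uniq st) _ _ he ve; rewrite hA hB hC !inE !eqxx /=.
case/(_ isT isT)/or3P=> /eqP eE; move: ye; rewrite eE !inE (negbTE yv) /=;
  by case/orP=> ->; rewrite ?orbT.
Qed.

Lemma star_triangle_apex a b c : star_triangle a b c ->
  exists P Q, [&& P \in H, Q \in H & P != Q] /\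
              [&& v \notin P, v \notin Q, a \in P, c \in P, b \in Q & c \in Q].
Proof.
move=> st; have [vabc /and3P[hA _ _]] := st.
have gab : good_pair H a b by apply: good_link; split=> //; distinct vabc.
have [y [P [Q [Ny yab /and3P[hP hQ PQ] /and5P[vP vQ aP yP /andP[bQ yQ]]]]]] :=
  good_link_apex gab hA.
have yc : y = c.
  move: (star_triangle_vertex st Ny) yab; rewrite !inE -orbA negb_or.
  by case/or3P=> /eqP-> //; rewrite eqxx ?andbF.
by exists P, Q; rewrite hP hQ PQ vP vQ aP bQ -yc yP yQ.
Qed.

Lemma star_triangle_absurd a b c : ~ star_triangle a b c.
Proof.
move=> st; have [vabc /and3P[hA hB hC]] := st; have uABC := star_triangle_uniq st.
have [P1 [Q1 [/and3P[hP1 hQ1 PQ1] /and5P[vP1 vQ1 aP1 cP1 /andP[bQ1 cQ1]]]]] :=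
  star_triangle_apex st.
have [P2 [Q2 [/and3P[hP2 hQ2 PQ2] /and5P[vP2 vQ2 bP2 aP2 /andP[cQ2 aQ2]]]]] :=
  star_triangle_apex (star_triangle_rot st).
have [P3 [Q3 [/and3P[hP3 hQ3 PQ3] /and5P[vP3 vQ3 cP3 bP3 /andP[aQ3 bQ3]]]]] :=
  star_triangle_apex (star_triangle_rot (star_triangle_rot st)).
have bP1 : b \in P1.
  apply: (K4free_third_vertex K4free (v := v) (a := a) (b := c) (Ea := [set v; c; a])
           (Eb := [set v; b; c]) (Ec := [set v; a; b]) (G1 := Q3) (G2 := P3)) => //.
  - by distinct vabc.
  - by distinct uABC.
  - by rewrite hA hB hC.
  - by rewrite !subset2 !inE !eqxx /= ?orbT.
  - by rewrite eq_sym.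
have aQ1 : a \in Q1.
  apply: (K4free_third_vertex K4free (v := v) (a := b) (b := c) (Ea := [set v; a; b])
           (Eb := [set v; b; c]) (Ec := [set v; c; a]) (G1 := P2) (G2 := Q2)) => //.
  - by distinct vabc.
  - by rewrite hA hB hC.
  - by rewrite !subset2 !inE !eqxx /= ?orbT.
have abc : uniq [:: a; b; c] by distinct vabc.
move: PQ1; rewrite (card3_set3 (is3 hP1) abc aP1 bP1 cP1).
by rewrite (card3_set3 (is3 hQ1) abc aQ1 bQ1 cQ1) eqxx.
Qed.

Lemma star_adjacent_edges : exists a b c,
  [/\ uniq [:: v; a; b; c], [set v; a; b] \in H & [set v; b; c] \in H].
Proof.
have [A] : exists A, A \in [set e in H | v \in e].
  by apply/card_gt0P; rewrite -/(hdeg H v) deg3.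
rewrite inE => /andP[hA vA]; have [a [b [vab AE]]] := card3_split (is3 hA) vA.
rewrite {A}AE in hA vA *.
have gab : good_pair H a b by apply: good_link; split=> //; distinct vab.
have [B hB /and3P[vB BA abB]] := link_edge_not_isolated gab hA.
have [x [y [vxy Axy yB]]] : exists x y,
    [/\ uniq [:: v; x; y], [set v; x; y] = [set v; a; b] & y \in B].
  case/orP: abB => [aB|bB]; [exists b, a | exists a, b]; split=> //; first by distinct vab.
  exact: setUAC.
have vy : v != y by distinct vxy.
have [c vyc BE] := card3_extend (is3 hB) vB yB vy.
have cx : c != x by apply: contraNneq BA => cx; rewrite BE cx setUAC Axy.
exists x, y, c; split; [| by rewrite Axy | by rewrite -BE].
move: vxy vyc; rewrite /= !inE !negb_or !andbT -!andbA => /and3P[vx _ xy] /and3P[_ vc yc].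
by rewrite vx vy vc xy yc eq_sym cx.
Qed.

Lemma star_edges_overlap A B C : uniq [:: A; B; C] ->
  [&& A \in H, B \in H & C \in H] -> [&& v \in A, v \in B & v \in C] ->
  exists2 z, z != v & (z \in C) && ((z \in A) || (z \in B)).
Proof.
move=> uABC hABC vABC; have /and3P[_ _ hC] := hABC; have /and3P[_ _ vC] := vABC.
have [x [y [vxy CE]]] := card3_split (is3 hC) vC; rewrite CE in hC.
have gxy : good_pair H x y by apply: good_link; split=> //; distinct vxy.
have [D hD /and3P[vD DC xyD]] := link_edge_not_isolated gxy hC.
have := star_edges uABC hABC vABC hD vD; rewrite !inE CE (negbTE DC) orbF => DAB.
case/orP: xyD => [xD|yD]; [exists x | exists y]; try distinct vxy;
  rewrite !inE !eqxx ?orbT /=; by case/orP: DAB => /eqP <-; rewrite ?xD ?yD ?orbT.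
Qed.

Lemma star_common_vertex_avoids a b c C : uniq [:: v; a; b; c] ->
  [set v; a; b] \in H -> [set v; b; c] \in H -> C \in H -> v \in C ->
  C != [set v; a; b] -> C != [set v; b; c] -> b \notin C.
Proof.
move=> vabc hA hB hC vC CA CB; apply/negP => bC; have vb : v != b by distinct vabc.
have [w vbw CE] := card3_extend (is3 hC) vC bC vb.
have gvb : good_pair H v b.
  apply: good_spoke; split; [distinct vabc | exists [set v; a; b]];
  by rewrite // !inE !eqxx /= ?orbT.
have := good_pair_codegree K4free gvb (_ : [set v; b; a] \in H) hB (_ : [set v; b; w] \in H).
rewrite setUAC -CE => /(_ hA hC); apply/negP/negPn.
have wa : w != a by apply: contraNneq CA => wa; rewrite CE wa setUAC.
have wc : w != c by apply: contraNneq CB => wc; rewrite CE wc.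
by rewrite /= !inE !negb_or !(eq_sym _ w) wa wc !andbT; distinct vabc.
Qed.

Lemma star_path_of_edges a b c C : uniq [:: v; a; b; c] ->
  [set v; a; b] \in H -> [set v; b; c] \in H -> C \in H -> v \in C ->
  c \in C -> a \notin C -> b \notin C -> exists w, star_path a b c w.
Proof.
move=> vabc hA hB hC vC cC aC bC; have vc : v != c by distinct vabc.
have [w vcw CE] := card3_extend (is3 hC) vC cC vc.
have wb : w != b by apply: contraNneq bC => <-; rewrite CE !inE eqxx !orbT.
have wa : w != a by apply: contraNneq aC => <-; rewrite CE !inE eqxx !orbT.
exists w; split; last by rewrite hA hB -CE hC.
rewrite -[[:: v; a; b; c; w]]/(rcons [:: v; a; b; c] w) rcons_uniq vabc andbT.
have wvc : (w != v) && (w != c) by distinct vcw.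
by rewrite !inE !negb_or wa wb wvc.
Qed.

Lemma star_shape :
  (exists a b c, star_triangle a b c) \/ (exists p q r s, star_path p q r s).
Proof.
have [a [b [c [vabc hA hB]]]] := star_adjacent_edges.
have deg_gt2 : 2 < hdeg H v by rewrite deg3.
have [C [hC vC CA CB]] := hdeg_gt2_other [set v; a; b] [set v; b; c] deg_gt2.
have bC := star_common_vertex_avoids vabc hA hB hC vC CA CB.
have AB : [set v; a; b] != [set v; b; c].
  apply/negP => /eqP/setP/(_ a); rewrite !inE eqxx orbT /= => /esym.
  by apply/negP; distinct vabc.
have [z zv /andP[zC]] : exists2 z, z != v &
    (z \in C) && ((z \in [set v; a; b]) || (z \in [set v; b; c])).
  apply: star_edges_overlap; rewrite ?hA ?hB ?hC ?vC ?inE ?eqxx //.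
  by rewrite /= !inE !negb_or AB !(eq_sym _ C) CA CB.
have [aC|aC] := boolP (a \in C); have [cC|cC] := boolP (c \in C).
- left; exists a, b, c; split=> //; rewrite hA hB.
  by rewrite -(card3_set3 (is3 hC) _ vC cC aC) //; distinct vabc.
- have hB' : [set v; c; b] \in H by rewrite setUAC.
  have hA' : [set v; b; a] \in H by rewrite setUAC.
  have vcba : uniq [:: v; c; b; a] by distinct vabc.
  have [w cbaw] := star_path_of_edges vcba hB' hA' hC vC aC cC bC.
  by right; exists c, b, a, w.
- by right; have [w abcw] := star_path_of_edges vabc hA hB hC vC cC aC bC; exists a, b, c, w.
- rewrite !inE (negbTE zv) /= -orbA => /or4P[] /eqP zE; move: zC; rewrite zE;
  by rewrite ?(negbTE aC) ?(negbTE bC) ?(negbTE cC).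
Qed.
End Star.

Theorem lemma3p2 (n : nat) (H : {set {set 'I_n}}) (v1 : 'I_n) :
  5 <= n ->
  berge_K4_saturated H ->
  (forall H' : {set {set 'I_n}}, berge_K4_saturated H' -> #|H| <= #|H'|) ->
  hdeg H v1 = 3 ->
  (forall vi vj, in_Nd H v1 vi vj -> good_pair H vi vj) ->
  (forall vk, in_N H v1 vk -> good_pair H v1 vk) ->
  exists v2 v3 v4 v5 : 'I_n,
    contains_C35_on H [set v1; v2; v3; v4; v5].
Proof.
move=> _ [is3 [K4free _]] _ deg3 good_link good_spoke.
have [[a [b [c st]]] | [p [q [r [s sp]]]]] := star_shape K4free deg3 is3 good_link good_spoke.
  by case: (star_triangle_absurd K4free deg3 is3 good_link st).
by exists r, s, p, q; apply: (star_path_C35 K4free deg3 is3 good_link good_spoke sp).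
Qed.
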